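(* Let $S$ be a commutative ring, fix $q\in S$, and put $[2]=1+q$. Let $X,Y\in\mathbb{M}_2(S)$ have determinants $\delta,\delta'$, traces $t,t'$, and $q$-traces $\tau=\operatorname{tr}_q(X)$, $\tau'=\operatorname{tr}_q(Y)$, and let $\sigma=\operatorname{tr}_q(XY)$, $\sigma'=\operatorname{tr}_q(YX)$. Then $$q\cdot\det\,[X,Y]=[2]^2\,\delta'\delta-[2]\,\big(\delta\,t'\tau'+\delta'\,t\,\tau\big)+\big(\delta\,\tau'^2+\delta'\tau^2+\operatorname{tr}(XY)\,\tau'\tau-\sigma'\sigma\big).$$
   Context: $[X,Y]=XY-YX$. For $M=(m_{ij})\in\mathbb{M}_2(S)$ and $q\in S$, the $q$-trace is $\operatorname{tr}_q(M)=m_{11}+q\,m_{22}$. *)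

From HB Require Import structures.
From mathcomp Require Import all_boot all_order all_algebra.
Set Implicit Arguments. Unset Strict Implicit. Unset Printing Implicit Defensive.
Import GRing.Theory.
Local Open Scope ring_scope.

Definition qtr (S : comPzRingType) (q : S) (M : 'M[S]_2) : S :=
  M 0 0 + q * M 1 1.

Definition comm2 (S : comPzRingType) (X Y : 'M[S]_2) : 'M[S]_2 :=
  X *m Y - Y *m X.

From HB Require Import structures.
From mathcomp Require Import all_boot all_order all_algebra ring.
Local Open Scope ring_scope.
Import GRing.Theory.

Lemma big_ord2 (V : nmodType) (F : 'I_2 -> V) : \sum_(i < 2) F i = F 0 + F 1.
Proof. by rewrite !big_ord_recl big_ord0 addr0; congr (F _ + F _); exact: val_inj. Qed.

Section Matrix2.
Variable R : comPzRingType.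

Lemma det_mx22 (A : 'M[R]_2) : \det A = A 0 0 * A 1 1 - A 0 1 * A 1 0.
Proof.
rewrite (expand_det_row A 0) big_ord2 /cofactor !det_mx11 !mxE.
have lift01 : lift 0 (0 : 'I_1) = 1 :> 'I_2 by exact: val_inj.
have lift10 : lift 1 (0 : 'I_1) = 0 :> 'I_2 by exact: val_inj.
by rewrite lift01 lift10 expr0 expr1 mul1r mulN1r mulrN.
Qed.

Lemma mxtrace22 (A : 'M[R]_2) : \tr A = A 0 0 + A 1 1.
Proof. exact: big_ord2. Qed.

End Matrix2.

Theorem theorem4p1 (S : comPzRingType) (q : S) (X Y : 'M[S]_2) :
  let two := 1 + q in
  let delta := \det X in
  let delta' := \det Y in
  let t := \tr X in
  let t' := \tr Y in
  let tau := qtr q X in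
  let tau' := qtr q Y in
  let sigma := qtr q (X *m Y) in
  let sigma' := qtr q (Y *m X) in
  q * \det (comm2 X Y) =
    two ^+ 2 * delta' * delta
    - two * (delta * t' * tau' + delta' * t * tau)
    + (delta * tau' ^+ 2 + delta' * tau ^+ 2 + \tr (X *m Y) * tau' * tau
       - sigma' * sigma).
Proof.
rewrite /= /qtr /comm2 !det_mx22 !mxtrace22 !mxE !big_ord2.
ring.
Qed.
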